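(* Let $N\ge2$, $J\ge2$, $M=\binom N2\binom J2$, and let $\mathbf{A}$ (an $M\times NJ$ matrix), $\mathbf{G}$ (an $NJ\times K$ matrix), $\mathbf{F}=\mathbf{A}\mathbf{G}$, and $\mathbf{d}=\mathbf{A}\mathbf{y}$ be as described in the context, with $E[\mathbf{d}]=\mathbf{F}\boldsymbol\theta$ for the effect vector $\boldsymbol\theta\in\mathbb{R}^K$. Let $\mathbf{v}\in\mathbb{R}^K$ and $\theta_e=\mathbf{v}^T\boldsymbol\theta$. Call a fixed weight vector $\mathbf{w}\in\mathbb{R}^M$ (and the estimator $\hat\theta=\mathbf{w}^T\mathbf{d}$) unbiased for $\theta_e$ if $\mathbf{F}^T\mathbf{w}=\mathbf{v}$, i.e. $E[\mathbf{w}^T\mathbf{d}]=\mathbf{v}^T\boldsymbol\theta$ for every $\boldsymbol\theta\in\mathbb{R}^K$; two weight vectors $\mathbf{w}_1,\mathbf{w}_2$ define the same estimator iff $\mathbf{A}^T\mathbf{w}_1=\mathbf{A}^T\mathbf{w}_2$. Then: (i) if $\operatorname{rank}(\mathbf{F}^T\mid\mathbf{v})>\operatorname{rank}(\mathbf{F}^T)$, there is no estimator of the form $\mathbf{w}^T\mathbf{d}$ that is unbiased for $\theta_e$; (ii) if $\operatorname{rank}(\mathbf{F}^T\mid\mathbf{v})=\operatorname{rank}(\mathbf{F}^T)=M$, there is a unique unbiased estimator of this form, given by the unique $\mathbf{w}$ solving $\mathbf{F}^T\mathbf{w}=\mathbf{v}$; (iii) if $\operatorname{rank}(\mathbf{F}^T\mid\mathbf{v})=\operatorname{rank}(\mathbf{F}^T)<M$,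 there are infinitely many weight vectors $\mathbf{w}$ giving unbiased estimators, and the set of distinct such estimators $\{\mathbf{A}^T\mathbf{w}:\mathbf{F}^T\mathbf{w}=\mathbf{v}\}$ is an affine subspace of $\mathbb{R}^{NJ}$ of dimension $(N-1)(J-1)-\operatorname{rank}(\mathbf{F})$.
   Context: Setting: $N$ units, $J$ periods, fixed treatment indicators $X_{ij}\in\{0,1\}$ with staggered adoption ($X_{ij}\le X_{i,j+1}$), $T_i=\min\{j:X_{ij}=1\}$, units ordered so $T_1\le\dots\le T_N$. $\mathbf{y}\in\mathbb{R}^{NJ}$ lists outcomes $Y_{ij}$ ordered by $i$ then $j$. The rows of $\mathbf{A}$ are indexed by quadruples $(i,i',j,j')$ with $1\le i<i'\le N$, $1\le j<j'\le J$; row $(i,i',j,j')$ has $+1$ in columns $(i,j')$ and $(i',j)$, $-1$ in columns $(i,j)$ and $(i',j')$, and $0$ elsewhere, so $\mathbf{d}$ has entries $D_{i,i',j,j'}=(Y_{ij'}-Y_{ij})-(Y_{i'j'}-Y_{i'j})$. An assumption setting assigns to each treated cell $(i,j)$ ($X_{ij}=1$) a label: S1: $(i,j,j-T_i+1)$; S2: $(j,j-T_i+1)$; S3: $j-T_i+1$; S4: $j$; S5: one common label. $\boldsymbol\theta\in\mathbb{R}^K$ lists the treatment effects for the $K$ distinct labels of treated cells; $\mathbf{G}$ has $((i,j),\ell)$ entry $1$ if $X_{ij}=1$ and cell $(i,j)$ has label $\ell$, $0$ otherwise. $(\mathbf{F}^T\mid\mathbf{v})$ denotes the augmented matrix obtained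 by appending column $\mathbf{v}$ to $\mathbf{F}^T$. *)

From HB Require Import structures.
From mathcomp Require Import all_boot all_order all_algebra.
From mathcomp Require Import reals.
Set Implicit Arguments. Unset Strict Implicit. Unset Printing Implicit Defensive.
Import Order.TTheory GRing.Theory Num.Theory.
Local Open Scope ring_scope.

(* Treatment indicators: X i j (unit i, period j), 0-based indices. *)
Definition staggered (N J : nat) (X : 'I_N -> 'I_J -> bool) : Prop :=
  forall (i : 'I_N) (j j' : 'I_J), (j <= j')%N -> X i j -> X i j'.

(* Adoption time T_i = first j with X i j (0-based); equals J (i.e. "never")
   if unit i is never treated. *)
Definition adopt (N J : nat) (X : 'I_N -> 'I_J -> bool) (i : 'I_N) : nat :=
  find (fun j : 'I_J => X i j) (enum 'I_J).

Definition units_ordered (N J : nat) (X : 'I_N -> 'I_J -> bool) : Prop :=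
  forall i i' : 'I_N, (i <= i')%N -> (adopt X i <= adopt X i')%N.

Inductive setting := S1 | S2 | S3 | S4 | S5.

(* Label of a (treated) cell, encoded uniformly as a triple of naturals.
   Event time j - T_i + 1 (well defined, >= 1, for treated cells). *)
Definition label (s : setting) (N J : nat) (X : 'I_N -> 'I_J -> bool)
    (i : 'I_N) (j : 'I_J) : nat * nat * nat :=
  let e := (j - adopt X i + 1)%N in
  match s with
  | S1 => (nat_of_ord i, nat_of_ord j, e)
  | S2 => (0%N, nat_of_ord j, e)
  | S3 => (0%N, 0%N, e)
  | S4 => (0%N, nat_of_ord j, 0%N)
  | S5 => (0%N, 0%N, 0%N)
  end.

Definition labels (s : setting) (N J : nat) (X : 'I_N -> 'I_J -> bool)
    : seq (nat * nat * nat) :=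
  undup [seq label s X c.1 c.2 | c <- enum [pred c : 'I_N * 'I_J | X c.1 c.2]].

Definition nK (s : setting) (N J : nat) (X : 'I_N -> 'I_J -> bool) : nat :=
  size (labels s X).

(* Columns of y / rows of G: cell (i,j) sits at index mxvec_index i j,
   i.e. ordered by i then j. *)
Definition Gmx (R : realType) (s : setting) (N J : nat)
    (X : 'I_N -> 'I_J -> bool) : 'M[R]_(N * J, nK s X) :=
  \matrix_(c, l)
    (if [exists i : 'I_N, exists j : 'I_J,
           [&& c == mxvec_index i j, X i j
             & label s X i j == nth (0%N, 0%N, 0%N) (labels s X) l]]
     then 1 else 0).

Definition quad (N J : nat) :=
  {q : 'I_N * 'I_N * 'I_J * 'I_J | (q.1.1.1 < q.1.1.2)%N && (q.1.2 < q.2)%N}.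

(* M = number of quadruples (= binom(N,2) * binom(J,2)); rows of A are
   indexed by the quadruples through enum_val. *)
Definition nM (N J : nat) : nat := #|{: quad N J}|.

Definition Amx (R : realType) (N J : nat) : 'M[R]_(nM N J, N * J) :=
  \matrix_(r, c)
    (let q := val (enum_val r) in
     let i := q.1.1.1 in let i' := q.1.1.2 in let j := q.1.2 in let j' := q.2 in
     (c == mxvec_index i j')%:R + (c == mxvec_index i' j)%:R
     - (c == mxvec_index i j)%:R - (c == mxvec_index i' j')%:R).

Definition Fmx (R : realType) (s : setting) (N J : nat)
    (X : 'I_N -> 'I_J -> bool) : 'M[R]_(nM N J, nK s X) :=
  Amx R N J *m Gmx R s X.

Definition unbiased (R : realType) (s : setting) (N J : nat)
    (X : 'I_N -> 'I_J -> bool) (v : 'cV[R]_(nK s X)) (w : 'cV[R]_(nM N J)) : Prop :=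
  (Fmx R s X)^T *m w = v.

(* Unbiasedness of w^T d is the linear system F^T w = v, so (i)-(iii) are
   Rouché–Capelli for this system: it is solvable iff appending v does not raise
   the rank, its solution is unique when F^T has full column rank, and otherwise
   the solutions form the affine space w0 + ker F^T, which is infinite.  The
   estimators A^T w then form A^T w0 + A^T (ker F^T); since F = A G we have
   ker A^T <= ker F^T, so this space has dimension rank A - rank F.  Finally
   rank A = (N-1)(J-1): every double difference is an alternating sum of four
   double differences anchored at the first unit and the first period, and the
   anchored ones at the (N-1)(J-1) interior cells are independent, because each
   is the only one involving its own interior cell. *)

From HB Require Import structures.
From mathcomp Require Import all_boot all_order all_algebra.
From mathcomp Require Import reals ring zify.
Import Order.TTheory GRing.Theory Num.Theory.
Local Open Scope ring_scope.

Section DoubleDifferenceRank.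
Variables (R : realType) (n m : nat).
Local Notation N := n.+1.
Local Notation J := m.+1.

Definition cell_row (i : 'I_N) (j : 'I_J) : 'rV[R]_(N * J) :=
  delta_mx 0 (mxvec_index i j).

Definition dd_row (i i' : 'I_N) (j j' : 'I_J) : 'rV[R]_(N * J) :=
  cell_row i j' + cell_row i' j - cell_row i j - cell_row i' j'.

Lemma row_Amx (r : 'I_(nM N J)) :
  let q := val (enum_val r) in row r (Amx R N J) = dd_row q.1.1.1 q.1.1.2 q.1.2 q.2.
Proof. by apply/rowP => c; rewrite !mxE. Qed.

Definition anchored_row (i : 'I_N) (j : 'I_J) := dd_row 0 i 0 j.

Lemma dd_row_anchored i i' j j' :
  dd_row i i' j j' =
  anchored_row i' j' - anchored_row i' j - anchored_row i j' + anchored_row i j.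
Proof. by apply/rowP => c; rewrite !mxE; ring. Qed.

Lemma anchored_row0l j : anchored_row 0 j = 0.
Proof. by rewrite /anchored_row /dd_row addrK subrr. Qed.

Lemma anchored_row0r i : anchored_row i 0 = 0.
Proof. by rewrite /anchored_row /dd_row [X in X - _]addrC addKr subrr. Qed.

Definition interior_cell (k : 'I_(n * m)) : 'I_N * 'I_J :=
  let ac := enum_val (cast_ord (esym (mxvec_cast n m)) k) in
  (lift 0 ac.1, lift 0 ac.2).

Lemma interior_cellE a c : interior_cell (mxvec_index a c) = (lift 0 a, lift 0 c).
Proof. by rewrite /interior_cell cast_ordK enum_rankK. Qed.

Lemma eq_mxvec_index (p q : nat) (i i' : 'I_p) (j j' : 'I_q) :
  (mxvec_index i j == mxvec_index i' j') = (i == i') && (j == j').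
Proof. by rewrite (inj_eq (@cast_ord_inj _ _ _)) (inj_eq enum_rank_inj). Qed.

Definition anchored_mx : 'M[R]_(n * m, N * J) :=
  \matrix_k anchored_row (interior_cell k).1 (interior_cell k).2.

Lemma anchored_row_sub i j : (anchored_row i j <= anchored_mx)%MS.
Proof.
case: (unliftP 0 i) => [a|] ->; last by rewrite anchored_row0l sub0mx.
case: (unliftP 0 j) => [c|] ->; last by rewrite anchored_row0r sub0mx.
have -> : anchored_row (lift 0 a) (lift 0 c) = row (mxvec_index a c) anchored_mx.
  by apply/rowP => col; rewrite !mxE interior_cellE.
exact: row_sub.
Qed.

Lemma Amx_sub_anchored : (Amx R N J <= anchored_mx)%MS.
Proof.
apply/row_subP => r; rewrite row_Amx dd_row_anchored.
have subN i j : (- anchored_row i j <= anchored_mx)%MS.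
  by rewrite eqmx_opp anchored_row_sub.
exact: addmx_sub (addmx_sub (addmx_sub (anchored_row_sub _ _) (subN _ _)) (subN _ _))
  (anchored_row_sub _ _).
Qed.

Lemma anchored_sub_Amx : (anchored_mx <= Amx R N J)%MS.
Proof.
apply/row_subP; case/mxvec_indexP => a c.
have lt_lift : ((ord0 : 'I_N) < lift ord0 a)%N && ((ord0 : 'I_J) < lift ord0 c)%N.
  by [].
pose q : quad N J := exist _ (ord0, lift 0 a, ord0, lift 0 c) lt_lift.
have -> : row (mxvec_index a c) anchored_mx = row (enum_rank q) (Amx R N J).
  rewrite row_Amx enum_rankK; apply/rowP => col.
  by rewrite !mxE interior_cellE.
exact: row_sub.
Qed.

Definition interior_coord_mx : 'M[R]_(N * J, n * m) :=
  \matrix_(col, k) - (col == mxvec_index (interior_cell k).1 (interior_cell k).2)%:R.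

Lemma mul_anchored_interior_coord : anchored_mx *m interior_coord_mx = 1%:M.
Proof.
apply/matrixP => k k'; rewrite !mxE.
pose c0 := mxvec_index (interior_cell k').1 (interior_cell k').2.
rewrite (bigD1 c0) //= big1 => [|col /negbTE col_neq]; last first.
  by rewrite !mxE col_neq oppr0 mulr0.
rewrite !mxE eqxx addr0 {}/c0.
case/mxvec_indexP: k => a c; case/mxvec_indexP: k' => a' c'.
rewrite !interior_cellE /= !eq_mxvec_index !lift_eqF !(inj_eq (@lift_inj _ _)).
by rewrite !eqxx andbF /= subr0 add0r sub0r mulrN1 opprK (eq_sym a) (eq_sym c).
Qed.

Lemma rank_Amx : \rank (Amx R N J) = (n * m)%N.
Proof.
rewrite (eqmx_rank (_ : Amx R N J == anchored_mx)%MS);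
  last by rewrite Amx_sub_anchored anchored_sub_Amx.
by apply/eqP/row_freeP; exists interior_coord_mx; exact: mul_anchored_interior_coord.
Qed.

End DoubleDifferenceRank.

Lemma rank_Amx_pred (R : realType) (N J : nat) : (0 < N)%N -> (0 < J)%N ->
  \rank (Amx R N J) = ((N - 1) * (J - 1))%N.
Proof. by case: N => // n; case: J => // m _ _; rewrite !subn1 rank_Amx. Qed.

Section LinearSystem.
Variables (K : numFieldType) (p q : nat) (M : 'M[K]_(p, q)) (v : 'cV[K]_p).

Lemma solvable_rank_row_mx :
  (exists w, M *m w = v) <-> \rank (row_mx M v) = \rank M.
Proof.
have [_] := mxrank_leqif_sup (addsmxSl M^T v^T).
rewrite addsmx_sub submx_refl addsmxE -tr_row_mx !mxrank_tr eq_sym => rank_eq.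
split => [[w M_w] | /eqP].
  by apply/eqP; rewrite rank_eq -M_w trmx_mul submxMl.
rewrite rank_eq => /submxP[u vE].
by exists u^T; rewrite -[v]trmxK vE trmx_mul trmxK.
Qed.

Lemma solutions_not_finite w0 : (\rank M < q)%N -> M *m w0 = v ->
  ~ exists S : seq 'cV[K]_q, forall w, M *m w = v -> w \in S.
Proof.
move=> rank_lt M_w0 [S S_sol].
have /rowV0Pn[k /sub_kermxP kM k_neq0] : kermx M^T != 0.
  by rewrite -mxrank_eq0 mxrank_ker mxrank_tr -lt0n subn_gt0.
pose sol (i : nat) := w0 + i%:R *: k^T.
have sol_inj : injective sol.
  move=> i j /addrI/eqP; rewrite -subr_eq0 -scalerBl scaler_eq0 trmx_eq0.
  by rewrite (negbTE k_neq0) orbF subr_eq0 eqr_nat => /eqP.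
have sol_in i : sol i \in S.
  apply: S_sol; rewrite mulmxDr M_w0 -scalemxAr -[M]trmxK -trmx_mul kM.
  by rewrite trmx0 scaler0 addr0.
have sols_uniq : uniq (map sol (iota 0 (size S).+1)).
  by rewrite map_inj_uniq ?iota_uniq.
have sols_in : {subset map sol (iota 0 (size S).+1) <= S}.
  by move=> _ /mapP[i _ ->]; exact: sol_in.
by have := uniq_leq_size sols_uniq sols_in; rewrite size_map size_iota ltnn.
Qed.

End LinearSystem.

Section SolutionImage.
Variables (K : fieldType) (p q r : nat) (F : 'M[K]_(p, q)) (A : 'M[K]_(p, r)).

Lemma image_solutions_affine (v : 'cV[K]_q) w0 : F^T *m w0 = v -> forall x,
  (exists w, F^T *m w = v /\ x = A^T *m w) <->
  ((x - A^T *m w0)^T <= kermx F *m A)%MS.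
Proof.
move=> F_w0 x; split => [[w [F_w ->]] | /submxP[u xE]].
  rewrite -mulmxBr trmx_mul trmxK submxMr // sub_kermx.
  by rewrite -[F]trmxK -trmx_mul mulmxBr F_w F_w0 subrr trmx0.
exists (w0 + (u *m kermx F)^T); split.
  by rewrite mulmxDr F_w0 -trmx_mul -mulmxA mulmx_ker mulmx0 trmx0 addr0.
by rewrite mulmxDr -trmx_mul -mulmxA -xE trmxK addrC subrK.
Qed.

Lemma mxrank_ker_mulmx_factor k (G : 'M[K]_(r, k)) :
  \rank (kermx (A *m G) *m A) = (\rank A - \rank (A *m G))%N.
Proof.
have kerA_sub : (kermx A <= kermx (A *m G))%MS.
  by rewrite sub_kermx mulmxA mulmx_ker mul0mx.
have := mxrank_mul_ker (kermx (A *m G)) A.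
rewrite (capmx_idPr kerA_sub) !mxrank_ker.
have := mxrankM_maxl A G; have := rank_leq_row A; lia.
Qed.

End SolutionImage.

Theorem theorem3 (R : realType) (s : setting) (N J : nat)
    (X : 'I_N -> 'I_J -> bool) (v : 'cV[R]_(nK s X)) :
  (2 <= N)%N -> (2 <= J)%N ->
  staggered X -> units_ordered X ->
  let F := Fmx R s X in
  let A := Amx R N J in
  [/\ (* (i) *)
      (\rank (row_mx F^T v) > \rank F^T)%N ->
        ~ (exists w : 'cV[R]_(nM N J), unbiased v w),
      (* (ii) *)
      \rank (row_mx F^T v) = \rank F^T -> \rank F^T = nM N J ->
        exists w : 'cV[R]_(nM N J),
          unbiased v w /\ forall w' : 'cV[R]_(nM N J), unbiased v w' -> w' = w
   & (* (iii) *)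
      \rank (row_mx F^T v) = \rank F^T -> (\rank F^T < nM N J)%N ->
        ~ (exists S : seq 'cV[R]_(nM N J),
             forall w : 'cV[R]_(nM N J), unbiased v w -> w \in S)
        /\ exists (x0 : 'cV[R]_(N * J)) (U : 'M[R]_(N * J)),
             \rank U = ((N - 1) * (J - 1) - \rank F)%N /\
             forall x : 'cV[R]_(N * J),
               (exists w : 'cV[R]_(nM N J), unbiased v w /\ x = A^T *m w)
               <-> ((x - x0)^T <= U)%MS].
Proof.
move=> N_ge2 J_ge2 _ _ F A; rewrite /unbiased -/F; split.
- by move=> rank_gt /solvable_rank_row_mx rank_eq; rewrite rank_eq ltnn in rank_gt.
- move=> /solvable_rank_row_mx[w F_w] rank_full; exists w; split => // w' F_w'.
  have F_full : row_full F^T by apply/eqP.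
  by apply: (row_full_inj F_full); rewrite F_w F_w'.
move=> /solvable_rank_row_mx[w0 F_w0] rank_deficient; split.
  exact: solutions_not_finite rank_deficient F_w0.
exists (A^T *m w0), <<kermx F *m A>>%MS; split; last first.
  by move=> x; rewrite genmxE; exact: image_solutions_affine.
by rewrite genmxE mxrank_ker_mulmx_factor rank_Amx_pred // ltnW.
Qed.
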